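(* Let $n\geq2$, $H=\{x\in\mathbb{R}^{n+1}:\sum_i x_i=0\}$, $A_n=\mathbb{Z}^{n+1}\cap H$, $\mathcal{P}$ the Voronoi region of $A_n$ in $H$ with vertex set $V_{\mathcal{P}}$, $p_H$ the orthogonal projection onto $H$, and $A_n^\#=p_H(\mathbb{Z}^{n+1})$. Let $\tilde G$ be the Cayley graph on $\frac12A_n^\#$ with generating set $\frac12V_{\mathcal{P}}$ (i.e. $x,y$ adjacent iff $x-y\in\frac12V_{\mathcal{P}}$), with graph distance $\tilde d$. Then for all $u_1,u_2\in\frac12A_n^\#$, $\tilde d(u_1,u_2)=2$ implies $\Vert u_1-u_2\Vert_{\mathcal{P}}=1$.
   Context: The Voronoi region of a lattice $\Lambda$ in a Euclidean space $E$ is $\{z\in E:\langle z-x,z-x\rangle\geq\langle z,z\rangle\ \forall x\in\Lambda\}$. $\Vert x\Vert_{\mathcal{P}}=\inf\{\lambda\geq0:x\in\lambda\mathcal{P}\}$. It is known that $V_{\mathcal{P}}=\{p_H(u):u\in\{0,1\}^{n+1}\setminus\{(0,\dots,0),(1,\dots,1)\}\}$ and that $\Vert x\Vert_{\mathcal{P}}=\max_j x_j-\min_i x_i$ for $x\in H$. *)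

From mathcomp Require Import all_boot all_order all_algebra.
From mathcomp Require Import boolp classical_sets reals.
Set Implicit Arguments. Unset Strict Implicit. Unset Printing Implicit Defensive.
Import Order.TTheory GRing.Theory Num.Theory.
Local Open Scope ring_scope.
Local Open Scope classical_set_scope.

Section Defs.
Variables (R : realType) (n : nat).
Notation V := 'rV[R]_(n.+1).

Definition dotp (x y : V) : R := \sum_(i < n.+1) x 0 i * y 0 i.

Definition Hplane : set V := [set x | \sum_(i < n.+1) x 0 i = 0].

Definition Zvec : set V := [set x | forall i, exists z : int, x 0 i = z%:~R].

Definition An : set V := Zvec `&` Hplane.

Definition voronoi : set V :=
  [set z | Hplane z /\ forall x, An x -> dotp (z - x) (z - x) >= dotp z z].

Definition extreme_points (S : set V) : set V :=
  [set z | S z /\ forall a b (t : R), S a -> S b -> 0 < t -> t < 1 ->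
     z = t *: a + (1 - t) *: b -> a = z /\ b = z].

Definition VP : set V := extreme_points voronoi.

Definition pH (x : V) : V :=
  x - ((\sum_(i < n.+1) x 0 i) / n.+1%:R) *: const_mx 1.

Definition Ansharp : set V := pH @` Zvec.

Definition half (S : set V) : set V := [set 2^-1 *: x | x in S].

Definition gauge (P : set V) (x : V) : R :=
  inf [set l : R | 0 <= l /\ exists2 p, P p & x = l *: p].

Definition cvert : set V := half Ansharp.
Definition cadj (x y : V) : Prop := cvert x /\ cvert y /\ half VP (x - y).

Fixpoint walk (k : nat) (x y : V) : Prop :=
  match k with
  | 0 => x = y
  | k.+1 => exists z, cadj x z /\ walk k z y
  end.

Definition gdist_is (x y : V) (k : nat) : Prop :=
  walk k x y /\ forall j, (j < k)%N -> ~ walk j x y.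

End Defs.

From Pilot Require Import Defs.
From mathcomp Require Import all_boot all_order all_algebra.
From mathcomp Require Import boolp classical_sets reals.
From mathcomp Require Import ring lra zify.
Set Implicit Arguments. Unset Strict Implicit. Unset Printing Implicit Defensive.
Import Order.TTheory GRing.Theory Num.Theory.
Local Open Scope ring_scope.
Local Open Scope classical_set_scope.

(* The Voronoi region P of A_n is {z in H : z_i - z_j <= 1 for all i, j}, and
   its vertices are the points of H whose coordinates take exactly two values
   c and c + 1.  If d~(u1, u2) = 2 then u1 - u2 = (a + b)/2 for vertices a, b,
   so its coordinates lie in {g, g + 1/2, g + 1}.  Were only two adjacent values
   present, u1 - u2 would be 0 or half a vertex, i.e. at distance at most 1;
   hence both g and g + 1 occur, so u1 - u2 lies in P but in no smaller
   dilate of P. *)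

Lemma int_sqr_ge_2mul (R : realFieldType) (w : int) (y : R) :
  -(1/2) <= y -> y <= 1/2 -> 2 * y * w%:~R <= w%:~R * w%:~R.
Proof.
move=> y_ge y_le.
have [w_le|[->|w_ge]] : (w <= -1)%R \/ w = 0 \/ (1 <= w)%R by lia.
- have : w%:~R <= -1 :> R by rewrite -(ler_int R) in w_le.
  by move=> ?; nra.
- by rewrite !mulr0.
- have : 1 <= w%:~R :> R by rewrite -(ler_int R) in w_ge.
  by move=> ?; nra.
Qed.

Section Voronoi.
Variables (R : realType) (n : nat).
Notation V := 'rV[R]_(n.+1).

Lemma exists_min_coord (z : V) : exists k, forall i, z 0 k <= z 0 i.
Proof.
have [k _ k_min] := @arg_minP _ R _ (ord0 : 'I_n.+1) xpredT (fun i => z 0 i) isT.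
by exists k => i; apply: k_min.
Qed.

Lemma HplaneD (x y : V) : Hplane x -> Hplane y -> Hplane (x + y).
Proof.
rewrite /Hplane /= => Hx Hy; under eq_bigr do rewrite mxE.
by rewrite big_split /= Hx Hy addr0.
Qed.

Lemma HplaneZ (a : R) (x : V) : Hplane x -> Hplane (a *: x).
Proof.
rewrite /Hplane /= => Hx; under eq_bigr do rewrite mxE.
by rewrite -mulr_sumr Hx mulr0.
Qed.

Lemma Hplane_subr (x y : V) :
  \sum_(i < n.+1) x 0 i = \sum_(i < n.+1) y 0 i -> Hplane (x - y).
Proof.
move=> sum_xy; rewrite /Hplane /=; under eq_bigr do rewrite !mxE.
by rewrite sumrB sum_xy subrr.
Qed.

Lemma HplaneB (x y : V) : Hplane x -> Hplane y -> Hplane (x - y).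
Proof. by move=> Hx Hy; apply: Hplane_subr; rewrite Hx Hy. Qed.

Lemma Hplane_pH (x : V) : Hplane (pH x).
Proof.
rewrite /Hplane /=; under eq_bigr do rewrite !mxE mulr1.
rewrite sumrB sumr_const card_ord -(mulr_natr (_ / _)) divfK ?subrr //.
by rewrite pnatr_eq0.
Qed.

Lemma Hplane_const_eq0 (x : V) (c : R) :
  Hplane x -> (forall i, x 0 i = c) -> x = 0.
Proof.
rewrite /Hplane /= => Hx x_c.
move: Hx; under eq_bigr do rewrite x_c.
rewrite sumr_const card_ord => /eqP; rewrite mulrn_eq0 /= => /eqP c0.
by apply/rowP => i; rewrite x_c c0 mxE.
Qed.

Lemma dotpBB (z x : V) :
  dotp (z - x) (z - x) = dotp z z - 2 * dotp z x + dotp x x.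
Proof.
rewrite /dotp mulr_sumr -sumrB -big_split /=; apply: eq_bigr => l _.
by rewrite !mxE; ring.
Qed.

Lemma dotpBr (y a b : V) : dotp y (a - b) = dotp y a - dotp y b.
Proof. by rewrite /dotp -sumrB; apply: eq_bigr => l _; rewrite !mxE mulrBr. Qed.

Lemma dotp_delta (y : V) (k : 'I_n.+1) : dotp y (delta_mx 0 k) = y 0 k.
Proof.
rewrite /dotp (bigD1 k) //= big1 => [|l /negbTE l_k]; rewrite mxE ?l_k.
  by rewrite !eqxx mulr1 addr0.
by rewrite andbF mulr0.
Qed.

Lemma Hplane_deltaB (i j : 'I_n.+1) : Hplane (delta_mx 0 i - delta_mx 0 j : V).
Proof.
have sum_delta k : \sum_(l < n.+1) (delta_mx 0 k : V) 0 l = 1.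
  rewrite (bigD1 k) //= big1 => [|l /negbTE l_k]; rewrite mxE ?l_k.
    by rewrite !eqxx addr0.
  by rewrite andbF.
by apply: Hplane_subr; rewrite !sum_delta.
Qed.

Lemma An_deltaB (i j : 'I_n.+1) : An (delta_mx 0 i - delta_mx 0 j : V).
Proof.
split; last exact: Hplane_deltaB.
move=> l; exists ((l == i)%:Z - (l == j)%:Z); rewrite !mxE /=.
by rewrite rmorphB /= -!pmulrn.
Qed.

Lemma voronoi_coord_diff (z : V) (i j : 'I_n.+1) :
  voronoi z -> z 0 i - z 0 j <= 1.
Proof.
pose x : V := delta_mx 0 i - delta_mx 0 j.
have dotp_x y : dotp y x = y 0 i - y 0 j by rewrite dotpBr !dotp_delta.
case=> _ /(_ x (An_deltaB i j)); rewrite dotpBB !dotp_x !mxE !eqxx /=.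
have [->|_] := eqVneq i j; first by rewrite !subrr ler01.
by rewrite mulr0n; lra.
Qed.

(* For x in H and any c, <z, x> = <z - c 1, x>; with c = min z + 1/2 every
   coordinate of z - c 1 lies in [-1/2, 1/2]. *)
Lemma voronoi_of_coord_diff (z : V) :
  Hplane z -> (forall i j, z 0 i - z 0 j <= 1) -> voronoi z.
Proof.
move=> Hz z_diff; split => // x [Zx Hx].
have [k k_min] := exists_min_coord z.
pose c := z 0 k + 1/2.
have -> : dotp (z - x) (z - x) =
    dotp z z + \sum_(l < n.+1) (x 0 l * x 0 l - 2 * (z 0 l - c) * x 0 l).
  have -> : \sum_(l < n.+1) (x 0 l * x 0 l - 2 * (z 0 l - c) * x 0 l) =
      \sum_(l < n.+1) (x 0 l * x 0 l - 2 * (z 0 l * x 0 l))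
      + 2 * c * \sum_(l < n.+1) x 0 l.
    by rewrite mulr_sumr -big_split; apply: eq_bigr => l _ /=; ring.
  have -> : \sum_(l < n.+1) x 0 l = 0 := Hx.
  by rewrite mulr0 addr0 sumrB -mulr_sumr dotpBB /dotp; ring.
rewrite lerDl; apply: sumr_ge0 => l _; rewrite subr_ge0.
have [w ->] := Zx l; apply: int_sqr_ge_2mul.
all: have := k_min l; have := z_diff l k; rewrite /c; lra.
Qed.

Lemma voronoiP (z : V) :
  voronoi z <-> Hplane z /\ forall i j, z 0 i - z 0 j <= 1.
Proof.
split=> [Pz|[]]; last exact: voronoi_of_coord_diff.
by split=> [|i j]; [case: Pz | exact: voronoi_coord_diff].
Qed.

(* p_H(u) with u in {0,1}^(n+1) has coordinates c and c + 1, c = -(sum u)/(n+1). *)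
Definition two_valued (c : R) (z : V) := forall i, z 0 i = c \/ z 0 i = c + 1.

(* If some coordinate of a vertex z lay strictly between min z and min z + 1,
   moving z by +-d, where d is the projection onto H of the bump
   g_i = (z_i - m)(m + 1 - z_i), would stay inside P; z, being the midpoint,
   then forces d = 0. *)
Lemma VP_two_valued (z : V) : VP z -> exists c, two_valued c z.
Proof.
case=> Pz z_extreme; have [Hz z_diff] := (voronoiP z).1 Pz.
have [k k_min] := exists_min_coord z; set m := z 0 k.
pose g : V := \row_i ((z 0 i - m) * (m + 1 - z 0 i)).
pose mu := (\sum_(l < n.+1) g 0 l) / n.+1%:R.
have [d [Hd dE]] : exists d : V,
    Hplane d /\ forall i, d 0 i = (z 0 i - m) * (m + 1 - z 0 i) - mu.
  by exists (pH g); split=> [|i]; [apply: Hplane_pH | rewrite !mxE mulr1].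
have d_diff i j : z 0 i - z 0 j + (d 0 i - d 0 j) <= 1 /\
                  z 0 i - z 0 j - (d 0 i - d 0 j) <= 1.
  rewrite !dE; have := k_min i; have := k_min j.
  have := z_diff i k; have := z_diff j k; rewrite -/m => *; split; nra.
have Pzd : voronoi (z + d).
  apply/voronoiP; split; first exact: HplaneD.
  by move=> i j; rewrite !mxE; have [] := d_diff i j; lra.
have Pzd' : voronoi (z - d).
  apply/voronoiP; split; first exact: HplaneB.
  by move=> i j; rewrite !mxE; have [] := d_diff i j; lra.
have z_mid : z = 2^-1 *: (z + d) + (1 - 2^-1) *: (z - d).
  by apply/rowP => i; rewrite !mxE; lra.
have [zd_z _] := z_extreme _ _ 2^-1 Pzd Pzd' ltac:(lra) ltac:(lra) z_mid.
have d0 i : d 0 i = 0.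
  by have := congr1 (fun v : V => v 0 i) zd_z; rewrite mxE; lra.
have mu0 : mu = 0 by have := dE k; rewrite d0 subrr mul0r; lra.
exists m => i; have := dE i; rewrite d0 mu0 subr0 => /esym/eqP.
by rewrite mulf_eq0 => /orP[] /eqP; [left | right]; lra.
Qed.

Lemma VP_of_two_valued (c : R) (z : V) (i1 j1 : 'I_n.+1) :
  Hplane z -> two_valued c z -> z 0 i1 = c + 1 -> z 0 j1 = c -> VP z.
Proof.
move=> Hz z2 z_i1 z_j1.
have gap_eq_z (p : V) : Hplane p ->
    (forall i j, z 0 i = c + 1 -> z 0 j = c -> p 0 i - p 0 j = 1) -> p = z.
  move=> Hp p_gap; suff pz0 : p - z = 0 by apply/eqP; rewrite -subr_eq0 pz0.
  apply: (@Hplane_const_eq0 _ (p 0 j1 - c)); first exact: HplaneB.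
  move=> i; rewrite !mxE; case: (z2 i) => z_i.
    by have := p_gap i1 i z_i1 z_i; have := p_gap i1 j1 z_i1 z_j1; lra.
  by have := p_gap i j1 z_i z_j1; lra.
have Pz : voronoi z.
  apply/voronoiP; split=> // i j.
  by case: (z2 i) => ->; case: (z2 j) => ->; lra.
split=> // a b t Pa Pb t_gt0 t_lt1 z_ab.
have gaps i j : z 0 i = c + 1 -> z 0 j = c -> a 0 i - a 0 j = 1 /\ b 0 i - b 0 j = 1.
  move=> z_i z_j.
  have := voronoi_coord_diff i j Pa; have := voronoi_coord_diff i j Pb.
  have : z 0 i - z 0 j = t * (a 0 i - a 0 j) + (1 - t) * (b 0 i - b 0 j).
    by rewrite z_ab !mxE; ring.
  by rewrite z_i z_j => *; nra.
split; apply: gap_eq_z.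
- by case/voronoiP: Pa.
- by move=> i j z_i z_j; case: (gaps i j z_i z_j).
- by case/voronoiP: Pb.
- by move=> i j z_i z_j; case: (gaps i j z_i z_j).
Qed.

Lemma two_valued_VP_or_0 (c : R) (z : V) :
  Hplane z -> two_valued c z -> z = 0 \/ VP z.
Proof.
move=> Hz z2.
have [[i z_i]|no_top] := pselect (exists i, z 0 i = c + 1).
  have [[j z_j]|no_bot] := pselect (exists j, z 0 j = c).
    by right; apply: (VP_of_two_valued Hz z2 z_i z_j).
  left; apply: (Hplane_const_eq0 (c := c + 1) Hz) => l.
  by case: (z2 l) => // z_l; case: no_bot; exists l.
left; apply: (Hplane_const_eq0 (c := c) Hz) => l.
by case: (z2 l) => // z_l; case: no_top; exists l.
Qed.

Lemma half_two_valued_VP_or_0 (c : R) (x : V) : Hplane x ->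
  (forall i, x 0 i = c \/ x 0 i = c + 1/2) -> x = 0 \/ Defs.half (@VP R n) x.
Proof.
move=> Hx x2; have : two_valued (2 * c) (2 *: x).
  by move=> i; rewrite mxE; case: (x2 i) => ->; [left | right]; lra.
case/(two_valued_VP_or_0 (HplaneZ 2 Hx)) => [/eqP|VP2x].
  by rewrite scaler_eq0 pnatr_eq0 /= => /eqP; left.
by right; exists (2 *: x) => //; rewrite scalerA mulVf ?scale1r // pnatr_eq0.
Qed.

Lemma midpoint_VP_cases (a b : V) : VP a -> VP b ->
  let x := 2^-1 *: a + 2^-1 *: b in
  [\/ x = 0, Defs.half (@VP R n) x | voronoi x /\ exists i j, x 0 i - x 0 j = 1].
Proof.
move=> VPa VPb x.
have [[al a2] [be b2]] := (VP_two_valued VPa, VP_two_valued VPb).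
have Hx : Hplane x by apply: HplaneD; apply: HplaneZ; [case: VPa.1 | case: VPb.1].
pose g := (al + be) / 2.
have x3 i : [\/ x 0 i = g, x 0 i = g + 1/2 | x 0 i = g + 1].
  rewrite !mxE /g; case: (a2 i) => ->; case: (b2 i) => ->;
    [apply: Or31 | apply: Or32 | apply: Or32 | apply: Or33]; lra.
have [[i x_i]|no_top] := pselect (exists i, x 0 i = g + 1).
  have [[j x_j]|no_bot] := pselect (exists j, x 0 j = g).
    apply: Or33; split; last by exists i, j; rewrite x_i x_j; lra.
    apply/voronoiP; split=> // k l.
    by case: (x3 k) => ->; case: (x3 l) => ->; lra.
  have [k|x0|hx] := half_two_valued_VP_or_0 (c := g + 1/2) Hx;
    [|exact: Or31|exact: Or32].
  case: (x3 k) => x_k; [by case: no_bot; exists k | left | right]; lra.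
have [k|x0|hx] := half_two_valued_VP_or_0 (c := g) Hx; [|exact: Or31|exact: Or32].
case: (x3 k) => x_k; [left | right | by case: no_top; exists k]; lra.
Qed.

Lemma gauge_eq1 (P : set V) (x : V) : P x ->
  (forall l p, 0 <= l -> P p -> x = l *: p -> 1 <= l) -> gauge P x = 1.
Proof.
move=> Px x_out; rewrite /gauge; set S := [set l : R | _].
have S1 : S 1 by split; [exact: ler01 | exists x; rewrite ?scale1r].
have S_ge1 l : S l -> 1 <= l by case=> l_ge0 [p Pp x_lp]; apply: x_out Pp x_lp.
apply/eqP; rewrite eq_le; apply/andP; split.
  by apply: ge_inf => //; exists 1.
by apply: lb_le_inf => //; exists 1.
Qed.

Lemma gauge_voronoi_eq1 (x : V) (i j : 'I_n.+1) :
  voronoi x -> x 0 i - x 0 j = 1 -> gauge (@voronoi R n) x = 1.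
Proof.
move=> Px x_ij; apply: gauge_eq1 => // l p l_ge0 Pp x_lp.
have := voronoi_coord_diff i j Pp; move: x_ij; rewrite x_lp !mxE; nra.
Qed.

End Voronoi.

Theorem lemma10 (R : realType) (n : nat) (hn : (2 <= n)%N)
  (u1 u2 : 'rV[R]_(n.+1)) :
  cvert u1 -> cvert u2 -> gdist_is u1 u2 2 ->
  gauge (@voronoi R n) (u1 - u2) = 1.
Proof.
move=> Cu1 Cu2 [[z [[_ [_ [a VPa u1z]]] [w [[_ [_ [b VPb wu2]]] /= w_u2]]]] no_short].
subst w.
have u12 : u1 - u2 = 2^-1 *: a + 2^-1 *: b by rewrite u1z wu2 addrA subrK.
case: (midpoint_VP_cases VPa VPb); rewrite -u12.
- by move/eqP; rewrite subr_eq0 => /eqP u1u2; case: (no_short 0%N).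
- by move=> half_u12; case: (no_short 1%N) => //; exists u2.
- by case=> P_u12 [i [j u12_ij]]; apply: gauge_voronoi_eq1 P_u12 u12_ij.
Qed.
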